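(* Each of $d_{GH}$, $d^{us}_{GH}$, $d^{ls}_{GH}$, $d^{rc}_{GH}$ is a generalized pseudometric on nonempty metric spaces: for $d^{gen}_{GH}$ any one of them and any nonempty metric spaces $X,Y,Z$, we have $d^{gen}_{GH}(X,Y)\in[0,\infty]$, $d^{gen}_{GH}(X,X)=0$, $d^{gen}_{GH}(X,Y)=d^{gen}_{GH}(Y,X)$, and $d^{gen}_{GH}(X,Z)\le d^{gen}_{GH}(X,Y)+d^{gen}_{GH}(Y,Z)$.
   Context: For a metric space, $|xy|$ denotes distance. A set-valued map $f:X\rightrightarrows Y$ assigns to each $x\in X$ a nonempty $f(x)\subseteq Y$ and is identified with its graph. A correspondence between $X$ and $Y$ is a subset $R\subseteq X\times Y$ whose projections to $X$ and to $Y$ are both surjective, regarded as the set-valued map $x\mapsto R(x)=\{y:(x,y)\in R\}$; $R^{-1}=\{(y,x):(x,y)\in R\}$; $\mathcal R(X,Y)$ is the set of all correspondences. The distortion of a nonempty $\sigma\subseteq X\times Y$ is $\operatorname{dis}\sigma=\sup\{||xx'|-|yy'||:(x,y),(x',y')\in\sigma\}\in[0,\infty]$. A set-valued map $f$ between topological spaces is upper semicontinuous if for every $x$ and every open $U\supseteq f(x)$ there is a neighborhood $V$ of $x$ with $f(x')\subseteq U$ for all $x'\in V$; lower semicontinuous if for every $x$ and every open $U$ with $f(x)\cap U\ne\emptyset$ there is a neighborhood $V$ of $x$ with $f(x')\cap U\neq\emptyset$ for all $x'\in V$; continuous if both. $\mathcal R_{us}(X,Y)$ (resp. $\mathcal R_{ls}(X,Y)$,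 $\mathcal R_{rc}(X,Y)$) is the set of $R\in\mathcal R(X,Y)$ such that both $R$ and $R^{-1}$ are upper semicontinuous (resp. lower semicontinuous, continuous). Then $d_{GH}(X,Y)=\frac12\inf\{\operatorname{dis}R:R\in\mathcal R(X,Y)\}$, and $d^{us}_{GH},d^{ls}_{GH},d^{rc}_{GH}$ are defined by the same formula with $\mathcal R$ replaced by $\mathcal R_{us},\mathcal R_{ls},\mathcal R_{rc}$ respectively. *)

From HB Require Import structures.
From mathcomp Require Import all_boot all_order all_algebra.
From mathcomp Require Import all_classical all_reals ereal.
Set Implicit Arguments. Unset Strict Implicit. Unset Printing Implicit Defensive.
Import Order.TTheory GRing.Theory Num.Theory.
Local Open Scope classical_set_scope.
Local Open Scope ring_scope.

Record metric_space (R : realType) := MetricSpace {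
  mcarrier :> Type;
  mdist : mcarrier -> mcarrier -> R;
  mdist_ge0 : forall x y, 0 <= mdist x y;
  mdist_eq0 : forall x y, mdist x y = 0 <-> x = y;
  mdist_sym : forall x y, mdist x y = mdist y x;
  mdist_tri : forall x y z, mdist x z <= mdist x y + mdist y z
}.

Section Defs.
Variable R : realType.

Definition mopen (X : metric_space R) (U : set X) : Prop :=
  forall x, U x -> exists2 e : R, 0 < e & forall x', mdist x x' < e -> U x'.

(* upper / lower semicontinuity of a set-valued map between metric spaces
   (a neighborhood of x is a set containing some open ball around x) *)
Definition usc (X Y : metric_space R) (f : X -> set Y) : Prop :=
  forall x (U : set Y), mopen U -> f x `<=` U ->
    exists2 e : R, 0 < e & forall x', mdist x x' < e -> f x' `<=` U.

Definition lsc (X Y : metric_space R) (f : X -> set Y) : Prop :=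
  forall x (U : set Y), mopen U -> f x `&` U !=set0 ->
    exists2 e : R, 0 < e & forall x', mdist x x' < e -> f x' `&` U !=set0.

Definition is_corr (X Y : metric_space R) (S : set (X * Y)) : Prop :=
  (forall x : X, exists y : Y, S (x, y)) /\ (forall y : Y, exists x : X, S (x, y)).

Definition corr_map (X Y : metric_space R) (S : set (X * Y)) : X -> set Y :=
  fun x => [set y | S (x, y)].

Definition corr_inv (X Y : metric_space R) (S : set (X * Y)) : set (Y * X) :=
  [set p | S (p.2, p.1)].

Definition dis (X Y : metric_space R) (S : set (X * Y)) : \bar R :=
  ereal_sup [set (`| mdist pq.1.1 pq.2.1 - mdist pq.1.2 pq.2.2 |)%:E
            | pq in [set pq : (X * Y) * (X * Y) | S pq.1 /\ S pq.2]]%classic.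

Inductive gh_kind := GH_all | GH_us | GH_ls | GH_rc.

Definition admissible (k : gh_kind) (X Y : metric_space R) (S : set (X * Y)) : Prop :=
  is_corr S /\
  match k with
  | GH_all => True
  | GH_us => usc (corr_map S) /\ usc (corr_map (corr_inv S))
  | GH_ls => lsc (corr_map S) /\ lsc (corr_map (corr_inv S))
  | GH_rc => (usc (corr_map S) /\ lsc (corr_map S)) /\
             (usc (corr_map (corr_inv S)) /\ lsc (corr_map (corr_inv S)))
  end.

Definition dGH (k : gh_kind) (X Y : metric_space R) : \bar R :=
  ((2 : R)^-1)%:E * ereal_inf [set dis S | S in admissible k (X:=X) (Y:=Y)]%classic.

End Defs.

From mathcomp Require Import all_boot all_order all_algebra.
From mathcomp Require Import all_classical all_reals ereal.
(* Imported last so that [mdist], [mdist_ge0], [mdist_eq0] refer to [Defs]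
   rather than to MathComp-Analysis' metric structures. *)
From Pilot Require Import Defs.
Local Open Scope ring_scope.
Local Open Scope ereal_scope.

(* Admissible correspondences are closed under inversion and composition and
   contain the diagonal: semicontinuity of set-valued maps is preserved by
   composition, and the two directions of a correspondence are swapped by
   inversion.  Distortion is invariant under inversion, vanishes on the
   diagonal and is subadditive under composition (triangle inequality in R),
   so taking infima gives the pseudometric axioms. *)

Set Implicit Arguments.
Unset Strict Implicit.
Import Order.TTheory GRing.Theory Num.Theory.
Local Open Scope classical_set_scope.

Section ErealInf.
Variable R : realType.

Lemma ereal_inf_le_add (A B C : set (\bar R)) :
  (forall a, A a -> 0 <= a) -> (forall b, B b -> 0 <= b) ->
  (forall a b, A a -> B b -> exists2 c, C c & c <= a + b) ->
  ereal_inf C <= ereal_inf A + ereal_inf B.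
Proof.
move=> A0 B0 sumC.
have infA0 : 0 <= ereal_inf A by apply: le_ereal_inf_tmp => a /A0.
have infB0 : 0 <= ereal_inf B by apply: le_ereal_inf_tmp => b /B0.
case EA: (ereal_inf A) infA0 => [a| |] // _; last first.
  by rewrite addye ?leey //; apply: contraTN infB0 => /eqP ->.
case EB: (ereal_inf B) infB0 => [b| |] // _; last by rewrite addey ?leey.
apply/lee_addgt0Pr => e e0.
have e2 : (0 < e / 2)%R by rewrite divr_gt0.
have [a' Aa' lta] : exists2 x, A x & x < (a + e / 2)%:E.
  by rewrite EFinD -EA; apply: lb_ereal_inf_adherent; rewrite // EA.
have [b' Bb' ltb] : exists2 x, B x & x < (b + e / 2)%:E.
  by rewrite EFinD -EB; apply: lb_ereal_inf_adherent; rewrite // EB.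
have [c Cc le_c] := sumC _ _ Aa' Bb'.
apply: le_trans (ereal_inf_lbound Cc) _; apply: le_trans le_c _.
apply: le_trans (leeD (ltW lta) (ltW ltb)) _.
by rewrite -EFinD lee_fin addrACA -splitr.
Qed.

End ErealInf.

Section SetValuedMaps.
Variable R : realType.
Implicit Types X Y Z : metric_space R.

Lemma mdistxx X (x : X) : mdist x x = 0%R.
Proof. exact/(mdist_eq0 x x). Qed.

Definition smap_comp X Y Z (f : X -> set Y) (g : Y -> set Z) : X -> set Z :=
  fun x => [set z | exists y, f x y /\ g y z].

Lemma usc_comp X Y Z (f : X -> set Y) (g : Y -> set Z) :
  usc f -> usc g -> usc (smap_comp f g).
Proof.
move=> uf ug x U oU fgxU.
pose V y := exists2 e : R, (0 < e)%R &
  forall y', (mdist y y' < e)%R -> g y' `<=` U.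
have oV : mopen V.
  move=> y [e e0 gU]; exists e => // y' yy'.
  exists (e - mdist y y')%R; first by rewrite subr_gt0.
  move=> y'' y'y''; apply: gU.
  by apply: le_lt_trans (mdist_tri y y' y'') _; rewrite -ltrBrDl.
have fxV : f x `<=` V by move=> y fxy; apply: ug => // z gyz; apply: fgxU; exists y.
have [e e0 fV] := uf x V oV fxV.
exists e => // x' xx' z [y [fx'y gyz]].
have [e' e'0 gU] := fV x' xx' y fx'y.
by apply: (gU y) => //; rewrite mdistxx.
Qed.

Lemma lsc_comp X Y Z (f : X -> set Y) (g : Y -> set Z) :
  lsc f -> lsc g -> lsc (smap_comp f g).
Proof.
move=> lf lg x U oU [z [[y [fxy gyz]] Uz]].
pose V y := g y `&` U !=set0.
have oV : mopen V by move=> y' /(lg y' U oU) [e e0 gU]; exists e.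
have [e e0 fV] := lf x V oV (ex_intro _ y (conj fxy (ex_intro _ z (conj gyz Uz)))).
exists e => // x' xx'.
have [y' [fx'y' [z' [gy'z' Uz']]]] := fV x' xx'.
by exists z'; split => //; exists y'.
Qed.

Lemma usc_eq X : usc (fun x : X => [set y | x = y]).
Proof.
move=> x U oU xU; have [e e0 ballU] := oU x (xU x erefl).
by exists e => // x' xx' _ <-; exact: ballU.
Qed.

Lemma lsc_eq X : lsc (fun x : X => [set y | x = y]).
Proof.
move=> x U oU [_ [<- Ux]]; have [e e0 ballU] := oU x Ux.
by exists e => // x' xx'; exists x'; split => //; exact: ballU.
Qed.

End SetValuedMaps.

Section Correspondences.
Variable R : realType.
Implicit Types X Y Z : metric_space R.

Definition corr_comp X Y Z (S1 : set (X * Y)) (S2 : set (Y * Z)) : set (X * Z) :=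
  [set p | exists y, S1 (p.1, y) /\ S2 (y, p.2)].

Definition corr_diag X : set (X * X) := [set p | p.1 = p.2].
Arguments corr_diag : clear implicits.

Lemma corr_invK X Y (S : set (X * Y)) : corr_inv (corr_inv S) = S.
Proof. by apply/seteqP; split => -[]. Qed.

Lemma corr_inv_comp X Y Z (S1 : set (X * Y)) (S2 : set (Y * Z)) :
  corr_inv (corr_comp S1 S2) = corr_comp (corr_inv S2) (corr_inv S1).
Proof. by apply/seteqP; split => -[z x] [y []]; exists y. Qed.

Lemma corr_inv_diag X : corr_inv (corr_diag X) = corr_diag X.
Proof. by apply/seteqP; split => -[]. Qed.

Lemma corr_map_comp X Y Z (S1 : set (X * Y)) (S2 : set (Y * Z)) :
  corr_map (corr_comp S1 S2) = smap_comp (corr_map S1) (corr_map S2).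
Proof. by []. Qed.

Lemma admissible_inv k X Y (S : set (X * Y)) :
  admissible k S -> admissible k (corr_inv S).
Proof. by move=> [[domS codS] scS]; split=> //; rewrite corr_invK; case: k scS; tauto. Qed.

Lemma admissible_diag k X : admissible k (corr_diag X).
Proof.
split; first by split => x; exists x.
by rewrite corr_inv_diag; case: k; do ?split; first [exact: usc_eq | exact: lsc_eq].
Qed.

Lemma admissible_comp k X Y Z (S1 : set (X * Y)) (S2 : set (Y * Z)) :
  admissible k S1 -> admissible k S2 -> admissible k (corr_comp S1 S2).
Proof.
move=> [[dom1 cod1] sc1] [[dom2 cod2] sc2]; split.
  split.
  - by move=> x; have [y S1xy] := dom1 x; have [z S2yz] := dom2 y; exists z, y.
  - by move=> z; have [y S2yz] := cod2 z; have [x S1xy] := cod1 y; exists x, y.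
rewrite corr_inv_comp !corr_map_comp.
case: k sc1 sc2 => //= sc1 sc2; do ?split;
  first [apply: usc_comp | apply: lsc_comp]; tauto.
Qed.

Lemma dis_ge0 X Y (S : set (X * Y)) p : S p -> 0 <= dis S.
Proof.
move=> Sp; apply: le_ereal_sup_tmp.
by exists (`|mdist p.1 p.1 - mdist p.2 p.2|)%R%:E; [exists (p, p) | rewrite lee_fin].
Qed.

Lemma admissible_dis_ge0 k X Y (S : set (X * Y)) :
  inhabited X -> admissible k S -> 0 <= dis S.
Proof. by move=> [x] [[domS _] _]; have [y] := domS x; exact: dis_ge0. Qed.

Lemma dis_inv X Y (S : set (X * Y)) : dis (corr_inv S) <= dis S.
Proof.
apply: ge_ereal_sup => _ [[[y x] [y' x']] /= [Sxy Sx'y'] <-].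
by apply: ereal_sup_ubound; exists ((x, y), (x', y')); rewrite //= distrC.
Qed.

Lemma dis_diag X (x : X) : dis (corr_diag X) = 0.
Proof.
apply: le_anti; rewrite (@dis_ge0 _ _ (corr_diag X) (x, x)) // andbT.
apply: ge_ereal_sup => _ [[[a a'] [b b']] [aa' bb'] <-].
by move: aa' bb'; rewrite /corr_diag /= => -> ->; rewrite subrr normr0.
Qed.

Lemma dis_comp X Y Z (S1 : set (X * Y)) (S2 : set (Y * Z)) :
  dis (corr_comp S1 S2) <= dis S1 + dis S2.
Proof.
apply: ge_ereal_sup => _ [[[x z] [x' z']] /= [[y [S1xy S2yz]] [y' [S1x'y' S2y'z']]] <-].
apply: (@le_trans _ _ ((`|mdist x x' - mdist y y'|)%R%:E +
                       (`|mdist y y' - mdist z z'|)%R%:E)).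
  by rewrite -EFinD lee_fin (le_trans _ (ler_normD _ _)) // addrA subrK.
by apply: leeD; apply: ereal_sup_ubound; [exists ((x, y), (x', y')) | exists ((y, z), (y', z'))].
Qed.

End Correspondences.
Arguments corr_diag {R} X.

Section GromovHausdorff.
Variable R : realType.
Implicit Types X Y Z : metric_space R.

Lemma half_ge0 : 0 <= ((2 : R)^-1)%:E.
Proof. by rewrite lee_fin invr_ge0. Qed.

Lemma inf_dis_ge0 k X Y : inhabited X ->
  0 <= ereal_inf [set dis S | S in admissible k (X:=X) (Y:=Y)].
Proof. by move=> hX; apply: le_ereal_inf_tmp => _ [S admS <-]; exact: admissible_dis_ge0 admS. Qed.

Lemma dGH_ge0 k X Y : inhabited X -> 0 <= dGH k X Y.
Proof. by move=> hX; rewrite mule_ge0 ?half_ge0 ?inf_dis_ge0. Qed.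

Lemma dGHxx k X : inhabited X -> dGH k X X = 0.
Proof.
move=> [x]; apply/eqP; rewrite eq_le dGH_ge0 // andbT /dGH.
rewrite -(mule0 ((2 : R)^-1)%:E) lee_wpmul2l ?half_ge0 // -(dis_diag x).
by apply: ereal_inf_lbound; exists (corr_diag X) => //; exact: admissible_diag.
Qed.

Lemma dGH_sym k X Y : dGH k X Y = dGH k Y X.
Proof.
have le_sym (A B : metric_space R) : dGH k A B <= dGH k B A.
  rewrite lee_wpmul2l ?half_ge0 //; apply: le_ereal_inf_tmp => _ [S admS <-].
  apply: le_trans (dis_inv S); apply: ereal_inf_lbound.
  by exists (corr_inv S) => //; exact: admissible_inv.
by apply: le_anti; rewrite !le_sym.
Qed.

Lemma dGH_triangle k X Y Z : inhabited X -> inhabited Y ->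
  dGH k X Z <= dGH k X Y + dGH k Y Z.
Proof.
move=> hX hY; rewrite /dGH -ge0_muleDr ?inf_dis_ge0 //.
rewrite lee_wpmul2l ?half_ge0 //; apply: ereal_inf_le_add.
- by move=> _ [S admS <-]; exact: admissible_dis_ge0 admS.
- by move=> _ [S admS <-]; exact: admissible_dis_ge0 admS.
move=> _ _ [S1 adm1 <-] [S2 adm2 <-]; exists (dis (corr_comp S1 S2)).
  by exists (corr_comp S1 S2) => //; exact: admissible_comp.
exact: dis_comp.
Qed.

End GromovHausdorff.

Theorem mainTheorem10 (R : realType) (k : gh_kind) (X Y Z : metric_space R)
  (hX : inhabited X) (hY : inhabited Y) (hZ : inhabited Z) :
  [/\ 0 <= dGH k X Y,
      dGH k X X = 0,
      dGH k X Y = dGH k Y X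
    & dGH k X Z <= dGH k X Y + dGH k Y Z].
Proof.
split.
- exact: dGH_ge0.
- exact: dGHxx.
- exact: dGH_sym.
- exact: dGH_triangle.
Qed.
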